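(* Let $T$ be a finite tree with $m$ edges, let $u \in V(T)$, $n \in \mathbf{N}$, and $i \in \{1,\ldots,n\}$. Then \[ \sum_{\substack{F \in I(T,n)\\ F(u)=i}} P(T,F) \le C^m . \]
   Context: For each $n \in \mathbf{N}$, $W_n = (w_{ij}^{(n)})_{i,j=1}^n$ is a random $n \times n$ Hermitian matrix whose upper triangular entries (diagonal included) are jointly independent, have mean zero and finite variances. It is assumed that there is a finite constant $C \ge 0$ such that \[ \sum_{j=1}^n \operatorname{Var}\bigl[w_{ij}^{(n)}\bigr] \le C \qquad \text{for all } n = 1,2,\ldots \text{ and } i = 1,\ldots,n. \] Graphs are undirected, may have loops, but have no multiple edges. For a finite graph $G$ and $n \in \mathbf{N}$, $I(G,n)$ denotes the set of all injections from $V(G)$ into $\{1,\ldots,n\}$. For $F \in I(G,n)$, \[ P(G,F) := \prod_{e \in E(G)} \operatorname{Var}\bigl[w_{F(u_e)F(v_e)}^{(n)}\bigr], \] where $u_e, v_e$ are the ends of the edge $e$ (well-defined since $W_n$ is Hermitian); an empty product equals $1$. *)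

From HB Require Import structures.
From mathcomp Require Import all_boot all_order all_algebra.
Set Implicit Arguments. Unset Strict Implicit. Unset Printing Implicit Defensive.
Import Order.TTheory GRing.Theory Num.Theory.
Local Open Scope ring_scope.

(* A finite graph is given by a finite vertex type V, a finite edge type E,
   and the map [ends : E -> V * V] giving the two ends (u_e, v_e) of each edge. *)

Definition no_multi_edges (V E : finType) (ends : E -> V * V) : Prop :=
  forall e f : E,
    (ends e == ends f) || (ends e == ((ends f).2, (ends f).1)) -> e = f.

Definition loopless (V E : finType) (ends : E -> V * V) : Prop :=
  forall e : E, (ends e).1 != (ends e).2.

Definition adj (V E : finType) (ends : E -> V * V) : rel V :=
  fun x y => [exists e : E, (ends e == (x, y)) || (ends e == (y, x))].

Definition connected_graph (V E : finType) (ends : E -> V * V) : Prop :=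
  forall x y : V, connect (adj ends) x y.

Definition acyclic_graph (V E : finType) (ends : E -> V * V) : Prop :=
  forall s : seq V, (3 <= size s)%N -> uniq s -> ~~ cycle (adj ends) s.

Definition is_tree (V E : finType) (ends : E -> V * V) : Prop :=
  [/\ loopless ends, no_multi_edges ends, connected_graph ends & acyclic_graph ends].

(* P(G,F) = prod_{e in E(G)} Var[w_{F(u_e) F(v_e)}], with the variance profile
   [var n i j] = Var[w^{(n)}_{ij}] (indices 0-based: 'I_n = {0,...,n-1}). *)
Definition Pweight (R : nzRingType) (var : forall n : nat, 'I_n -> 'I_n -> R)
  (V E : finType) (ends : E -> V * V) (n : nat) (F : {ffun V -> 'I_n}) : R :=
  \prod_(e : E) var n (F (ends e).1) (F (ends e).2).

From HB Require Import structures.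
From mathcomp Require Import all_boot all_order all_algebra.
Import Order.TTheory GRing.Theory Num.Theory.
Local Open Scope ring_scope.
Set Implicit Arguments. Unset Strict Implicit. Unset Printing Implicit Defensive.

(* Injectivity can be dropped, since all weights are nonnegative, and every
   single variance is at most C.  So it suffices to bound the sum restricted to
   the edges of a spanning tree D grown from u (the remaining edges, of which a
   tree has none, cost a factor C each).  Grow D by attaching one leaf at a
   time; summing out the label of the last leaf w, whose only edge in D joins it
   to an earlier vertex p, produces a row sum \sum_j Var[w_(F p) j] <= C, and
   induction gives C ^ #|D|.  Labellings of the vertices attached so far are
   encoded as maps V -> 'I_n that are constant equal to i elsewhere. *)

Section Growth.

Variables (V E : finType) (ends : E -> V * V) (u : V).

Definition joins (e : E) (x y : V) : bool :=
  (ends e == (x, y)) || (ends e == (y, x)).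

Inductive grown : seq V -> {set E} -> Prop :=
| grown_nil : grown [::] set0
| grown_rcons s D w p e : grown s D -> w \notin u :: s -> p \in u :: s ->
    joins e p w -> grown (rcons s w) (e |: D).

Lemma mem_rcons_cons (s : seq V) w x :
  (x \in u :: rcons s w) = (x == w) || (x \in u :: s).
Proof. by rewrite -rcons_cons mem_rcons inE. Qed.

Lemma grown_ends s D e :
  grown s D -> e \in D -> ((ends e).1 \in u :: s) && ((ends e).2 \in u :: s).
Proof.
move=> G; elim: G e => [|s' D' w p e' _ IH _ pin he] e; first by rewrite inE.
rewrite !mem_rcons_cons in_setU1 => /orP[/eqP -> | /IH /andP[-> ->]];
  last by rewrite !orbT.
by case/orP: he => /eqP -> /=; rewrite eqxx pin orbT.
Qed.

Lemma grown_uniq s D : grown s D -> uniq (u :: s).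
Proof. by elim=> [//|s' D' w p e _ IH wn _ _]; rewrite -rcons_cons rcons_uniq wn IH. Qed.

Lemma grown_new_edge s D w p e :
  grown s D -> w \notin u :: s -> joins e p w -> e \notin D.
Proof.
move=> G wn he; apply/negP => /(grown_ends G) /andP[h1 h2].
by case/orP: he => /eqP he; rewrite he /= in h1 h2; rewrite ?h1 ?h2 in wn.
Qed.

Lemma path_crossing (r : rel V) (S : pred V) a p :
  S a -> path r a p -> ~~ S (last a p) -> exists a' b', [/\ S a', ~~ S b' & r a' b'].
Proof.
elim: p a => [|b p IH] a Sa /=; first by rewrite Sa.
case/andP=> rab pb lb; case Sb: (S b); first exact: IH Sb pb lb.
by exists a, b; rewrite Sb Sa rab.
Qed.

Lemma grown_extend s D x :
  connected_graph ends -> grown s D -> x \notin u :: s ->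
  exists w e, grown (rcons s w) (e |: D).
Proof.
move=> conn G xn; have /connectP[p pp xl] := conn u x.
have := path_crossing (mem_head u s) pp; rewrite -xl => /(_ xn).
by case=> a [b [aS bS /existsP[e he]]]; exists b, e; exact: grown_rcons G bS aS he.
Qed.

Lemma connected_grown_spanning :
  connected_graph ends -> exists s D, grown s D /\ forall x, x \in u :: s.
Proof.
move=> conn.
suff [s [D [G /orP[big | /forallP cov]]]] : exists s D,
    grown s D /\ (#|V| <= size s)%N || [forall x, x \in u :: s].
- have := max_card (mem (u :: s)); by rewrite (card_uniqP (grown_uniq G)) ltnNge big.
- by exists s, D.
elim: #|V| => [|k [s [D [G /orP[ks | cov]]]]].
- by exists [::], set0; split; [exact: grown_nil | ].
- case: (boolP [forall x, x \in u :: s]) => [cov | /forallPn[x xn]].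
    by exists s, D; rewrite cov orbT.
  have [w [e G']] := grown_extend conn G xn.
  by exists (rcons s w), (e |: D); rewrite size_rcons ltnS ks.
- by exists s, D; rewrite cov orbT.
Qed.

End Growth.

Section FixedOff.

Variables (T : finType) (n : nat).

Definition ffun_upd (g : {ffun T -> 'I_n}) (w : T) (j : 'I_n) : {ffun T -> 'I_n} :=
  [ffun x => if x == w then j else g x].

Definition fixed_off (s : seq T) (i : 'I_n) (g : {ffun T -> 'I_n}) : bool :=
  [forall x, (x \notin s) ==> (g x == i)].

Lemma fixed_off_nil i g : fixed_off [::] i g = (g == [ffun=> i]).
Proof.
apply/forallP/eqP => [h | ->]; last by move=> x; rewrite ffunE eqxx implybT.
by apply/ffunP => x; rewrite ffunE; apply/eqP; exact: h.
Qed.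

Lemma sum_fixed_off_rcons (R : nmodType) (F : {ffun T -> 'I_n} -> R) s w i :
  w \notin s ->
  \sum_(g | fixed_off (rcons s w) i g) F g
    = \sum_(g | fixed_off s i g) \sum_(j < n) F (ffun_upd g w j).
Proof.
move=> ws.
rewrite (partition_big (fun g => ffun_upd g w i) (fixed_off s i)); last first.
  move=> g /forallP gi; apply/forallP => x; rewrite ffunE.
  case: (eqVneq x w) => [_|xw]; first by rewrite eqxx implybT.
  apply/implyP => xs; apply: (implyP (gi x)).
  by rewrite mem_rcons inE (negbTE xw).
apply: eq_bigr => g /forallP gi.
rewrite (reindex_onto (ffun_upd g w) (fun h => h w)); last first.
  by move=> h /andP[_ /eqP <-]; apply/ffunP => x; rewrite !ffunE; case: eqP => [->|].
apply: eq_bigl => j; rewrite ffunE eqxx eqxx andbT; apply/andP; split.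
  apply/forallP => x; rewrite ffunE mem_rcons inE.
  by case: eqP => //= _; exact: gi.
apply/eqP/ffunP => x; rewrite !ffunE; case: eqP => [->|//].
by apply/esym/eqP; apply: (implyP (gi w)).
Qed.

End FixedOff.

Section TreeSum.

Variables (R : realFieldType) (n : nat) (a : 'I_n -> 'I_n -> R) (C : R).
Hypotheses (C_ge0 : 0 <= C) (a_ge0 : forall i j, 0 <= a i j)
  (a_sym : forall i j, a i j = a j i) (a_row : forall i, \sum_(j < n) a i j <= C).

Lemma entry_le_row_bound i j : a i j <= C.
Proof.
apply: le_trans (a_row i); rewrite (bigD1 j) //= lerDl.
by apply: sumr_ge0 => k _; exact: a_ge0.
Qed.

Variables (V E : finType) (ends : E -> V * V) (u : V).

Definition edge_weight (g : {ffun V -> 'I_n}) (e : E) : R :=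
  a (g (ends e).1) (g (ends e).2).

Lemma edge_weight_upd g w j e s D :
  grown ends u s D -> e \in D -> w \notin u :: s ->
  edge_weight (ffun_upd g w j) e = edge_weight g e.
Proof.
move=> G eD wn; have /andP[h1 h2] := grown_ends G eD.
rewrite /edge_weight !ffunE.
by case: eqP => [e1|_]; [rewrite -e1 h1 in wn | case: eqP => [e2|//]; rewrite -e2 h2 in wn].
Qed.

Lemma sum_grown_weight_le s D i :
  grown ends u s D ->
  \sum_(g | fixed_off s i g) \prod_(e in D) edge_weight g e <= C ^+ #|D|.
Proof.
elim=> [|s' D' w p e G IH wn pin he].
  rewrite (eq_bigl _ _ (fixed_off_nil i)) big_pred1_eq big_set0 cards0 expr0 //.
have ws : w \notin s' by apply: contra wn => ws; rewrite inE ws orbT.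
have pw : p != w by apply: contraNneq wn => <-.
have eD' := grown_new_edge G wn he.
rewrite cardsU1 eD' exprS sum_fixed_off_rcons //.
apply: (le_trans _ (ler_wpM2l C_ge0 IH)); rewrite mulr_sumr.
apply: ler_sum => g _.
rewrite (eq_bigr (fun j =>
  edge_weight (ffun_upd g w j) e * \prod_(f in D') edge_weight g f)); last first.
  move=> j _; rewrite big_setU1 //=; congr (_ * _).
  by apply: eq_bigr => f fD; exact: edge_weight_upd G fD wn.
rewrite -mulr_suml; apply: ler_wpM2r; first by apply: prodr_ge0 => f _; exact: a_ge0.
suff -> : \sum_(j < n) edge_weight (ffun_upd g w j) e = \sum_(j < n) a (g p) j.
  exact: a_row.
apply: eq_bigr => j _; rewrite /edge_weight.
by case/orP: he => /eqP -> /=; rewrite !ffunE eqxx (negbTE pw) // a_sym.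
Qed.

Lemma prod_weight_le_off D g :
  \prod_(e : E) edge_weight g e <= C ^+ #|~: D| * \prod_(e in D) edge_weight g e.
Proof.
rewrite (bigID (mem D)) /= mulrC; apply: ler_wpM2r.
  by apply: prodr_ge0 => e _; exact: a_ge0.
rewrite -prodr_const (eq_bigl (fun e => e \in ~: D)) => [|e]; last by rewrite in_setC.
by apply: ler_prod => e _; rewrite a_ge0 entry_le_row_bound.
Qed.

Lemma sum_spanning_weight_le s D i :
  grown ends u s D -> (forall x, x \in u :: s) ->
  \sum_(g : {ffun V -> 'I_n} | g u == i) \prod_(e : E) edge_weight g e <= C ^+ #|E|.
Proof.
move=> G cov; have /andP[us _] := grown_uniq G.
have fixedE g : fixed_off s i g = (g u == i).
  apply/forallP/idP => [/(_ u) | gu x]; first by rewrite us.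
  by apply/implyP => xs; have := cov x; rewrite inE (negbTE xs) orbF => /eqP ->.
rewrite -(eq_bigl _ _ fixedE) -(cardsC D) exprD mulrC.
apply: le_trans (ler_wpM2l (exprn_ge0 _ C_ge0) (sum_grown_weight_le i G)).
by rewrite mulr_sumr; apply: ler_sum => g _; exact: prod_weight_le_off.
Qed.

End TreeSum.

Theorem lemma3p1 (R : realFieldType) (C : R)
  (var : forall n : nat, 'I_n -> 'I_n -> R)
  (hC : 0 <= C)
  (var_ge0 : forall (n : nat) (i j : 'I_n), 0 <= var n i j)
  (var_sym : forall (n : nat) (i j : 'I_n), var n i j = var n j i)
  (var_row : forall (n : nat) (i : 'I_n), \sum_(j < n) var n i j <= C)
  (V E : finType) (ends : E -> V * V) (hT : is_tree ends)
  (u : V) (n : nat) (i : 'I_n) :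
  \sum_(F : {ffun V -> 'I_n} | injectiveb F && (F u == i)) Pweight var ends F
    <= C ^+ #|E|.
Proof.
case: hT => _ _ conn _.
have [s [D [G cov]]] := connected_grown_spanning u conn.
apply: le_trans (sum_spanning_weight_le hC (var_ge0 n) (var_sym n) (var_row n) i G cov).
rewrite big_andbC big_mkcondr /=; apply: ler_sum => F _.
by case: injectiveb => //; apply: prodr_ge0 => e _; exact: var_ge0.
Qed.
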